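(* Let $d\ge1$, let $\ell_1>\ell_2>\dots>\ell_d\ge1$ and $r_1,\dots,r_d\ge1$ be integers, and let $n_1,\dots,n_d$ be positive integers with $n_i\ge 2r_i\ell_i$. For each $i$ fix a gap sequence $\vec g(i)=(g_1(i),\dots,g_{r_i}(i))$ of integers with $g_j(i)\ge2\ell_i$ and $\sum_j g_j(i)=n_i$. Let $P_d(\vec n,\vec\ell,\vec r)$ be the number of tuples $(p_1,\dots,p_d)$ with $p_i\in\mathbb Z/n_i\mathbb Z$ that are valid, meaning: there are no indices $i<j$, $a\in\{1,\dots,r_i\}$, $b\in\{1,\dots,r_j\}$ such that $e_a(i)\in W_i(\ell_j)$ and $e_b(j)\in W_j(\ell_j)$. Then this number does not depend on the choice of gap sequences, and it satisfies $P_0=1$, $P_1(n_1,\ell_1,r_1)=n_1$, and for $d\ge1$ $$P_d(\vec n,\vec\ell,\vec r)=\prod_{i=1}^d n_i-4\sum_{1\le i<j\le d} r_ir_j\ell_j^2\, P_{i-1}(\vec n(i),\vec\ell(i),\vec r(i))\prod_{i<k<j}(n_k-2r_k\ell_k)\prod_{k>j}n_k,$$ where $\vec n(i)=(n_1-2r_1\ell_i,\dots,n_{i-1}-2r_{i-1}\ell_i)$, $\vec\ell(i)=(\ell_1-\ell_i,\dots,\ell_{i-1}-\ell_i)$, $\vec r(i)=(r_1,\dots,r_{i-1})$. In particular, if $n_i=n-\ell_i-2\sum_{j\ne i}r_j\min(\ell_i,\ell_j)$ for each $i$, then $P_d$ is a monic polynomial in $n$ of degree $d$ (with $P_1=n-\ell_1$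 when $d=1$).
   Context: Notation: for track $i$ (a cycle $\mathbb Z/n_i\mathbb Z$ whose elements are represented by $1,\dots,n_i$, with $n_i$ called the boundary), given position $p_i$ and gap sequence $\vec g(i)$, the $a$-th run on track $i$ occupies the $\ell_i$ consecutive positions starting at $p_i+g_1(i)+\dots+g_{a-1}(i)$, and its end is $e_a(i)=p_i+g_1(i)+\dots+g_{a-1}(i)+\ell_i-1 \pmod{n_i}$. For $m\le n_i/2$, the window $W_i(m)\subseteq\mathbb Z/n_i\mathbb Z$ is the set of $2m$ residues $\{n_i-m+1,\dots,n_i,1,2,\dots,m\}$ (the $2m$ positions nearest the boundary). Empty products equal $1$. *)

(* Tracks are indexed 0..d-1 (paper's track i is index i-1 here);
   runs on a track are indexed 0..r_i-1 (paper's run a is index a-1). *)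
From HB Require Import structures.
From mathcomp Require Import all_boot all_order all_algebra.
Set Implicit Arguments.
Unset Strict Implicit.
Unset Printing Implicit Defensive.
Import Order.TTheory GRing.Theory Num.Theory.

(* Residue x (mod nn) lies in the window W(m) = {nn-m+1,...,nn,1,...,m} of Z/nnZ,
   i.e. its representative in 0..nn-1 is in {0..m} or in {nn-m+1..nn-1}. *)
Definition in_window (nn m x : nat) : bool :=
  (x %% nn <= m) || (nn - m < x %% nn).

Definition run_end (l : nat -> nat) (g : nat -> nat -> nat) (i : nat) (pi a : nat) : nat :=
  pi + (\sum_(c < a) g i c) + (l i - 1).

Definition valid (d : nat) (n l r : nat -> nat) (g : nat -> nat -> nat)
  (p : {dffun forall i : 'I_d, 'I_(n i)}) : bool :=
  [forall i : 'I_d, forall j : 'I_d, (i < j)%N ==>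
     ~~ ([exists a : 'I_(r i), in_window (n i) (l j) (run_end l g i (p i) a)] &&
         [exists b : 'I_(r j), in_window (n j) (l j) (run_end l g j (p j) b)])].

Definition count_valid (d : nat) (n l r : nat -> nat) (g : nat -> nat -> nat) : nat :=
  #|[pred p : {dffun forall i : 'I_d, 'I_(n i)} | valid l r g p]|.

Definition params_ok (d : nat) (n l r : nat -> nat) : Prop :=
  (forall i, (i.+1 < d)%N -> (l i.+1 < l i)%N) /\
  (forall i, (i < d)%N -> [/\ (1 <= l i)%N, (1 <= r i)%N & (2 * r i * l i <= n i)%N]).

Definition gaps_ok (d : nat) (n l r : nat -> nat) (g : nat -> nat -> nat) : Prop :=
  forall i, (i < d)%N ->
    (forall c, (c < r i)%N -> (2 * l i <= g i c)%N) /\ (\sum_(c < r i) g i c)%N = n i.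

(* Reduced parameters for (0-based) index i: n(i)_k = n_k - 2 r_k l_i, l(i)_k = l_k - l_i
   (only entries k < i are used, the reduced system having i tracks). *)
Definition red_n (n l r : nat -> nat) (i : nat) : nat -> nat := fun k => n k - 2 * r k * l i.
Definition red_l (l : nat -> nat) (i : nat) : nat -> nat := fun k => l k - l i.

From HB Require Import structures.
From mathcomp Require Import all_boot all_order all_algebra.
From mathcomp Require Import zify ring.
Import Order.TTheory GRing.Theory Num.Theory.
Set Implicit Arguments.
Unset Strict Implicit.
Unset Printing Implicit Defensive.

(* Let C_k(m) count the position tuples of the first k tracks that are valid and whose
   run ends all avoid the window W(m), for m <= l_k. Since the gaps on track k are at
   least 2 l_k, the 2m-arcs around its r_k run ends are disjoint, so exactly 2 r_k m of its
   positions put a run end into W(m), whatever the gaps. Adding track k, a position with no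
   run end in W(l_k) leaves the earlier tracks the constraint of C_k(m), while a position with
   a run end in W(l_k) but not in W(m) forces them to avoid W(l_k). Hence
     C_(k+1)(m) = C_k(m) (n_k - 2 r_k l_k) + C_k(l_k) (2 r_k l_k - 2 r_k m),
   a recursion in which the gaps no longer occur, and P_d = C_d(0). Unfolding it once and
   eliminating C_d(l_d) gives the closed formula; the reduced system of index i obeys the
   same recursion with every window widened by l_i, so its count is C_i(l_i). Finally, with
   n_k = n - c_k the recursion visibly produces a monic polynomial of degree d in n. *)

Lemma in_window_mono nn m m' x : m <= m' -> in_window nn m x -> in_window nn m' x.
Proof. by rewrite /in_window => le_mm' /orP [] ?; apply/orP; [left | right]; lia. Qed.

Lemma in_windowE nn m x : 0 < m -> m + m <= nn ->
  in_window nn m x = ((x + (m - 1)) %% nn < m + m).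
Proof.
move=> m_gt0 le_mn; have nn_gt0 : 0 < nn by lia.
rewrite /in_window modnD // (modn_small (m := m - 1)); last by lia.
have := ltn_pmod x nn_gt0; case: leqP => _ _; apply/idP/idP; lia.
Qed.

Lemma sum_ord_shift k (F : nat -> nat) c :
  \sum_(x < k.+1) F ((x + c) %% k.+1) = \sum_(x < k.+1) F x.
Proof.
rewrite [RHS](reindex_inj (addIr (inZp c : 'I_k.+1))).
by apply: eq_bigr => x _; rewrite /= modnDmr.
Qed.

Lemma sum_ord_ltn nn K : K <= nn -> \sum_(x < nn) (x < K) = K.
Proof.
move=> le_Kn; rewrite -(subnKC le_Kn) big_split_ord /= [X in _ + X]big1 => [|x _].
  by rewrite addn0 (eq_bigr (fun=> 1)) ?sum1_card ?card_ord // => x _; rewrite ltn_ord.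
by rewrite ltnNge leq_addr.
Qed.

Lemma exists_sum_uniq (I : finType) (P : pred I) :
  (forall a b, P a -> P b -> a = b) -> [exists a, P a] = \sum_a P a :> nat.
Proof.
move=> P_uniq; case: existsP => [[a Pa] | noP].
  rewrite (bigD1 a) //= Pa big1 // => b neq_ba.
  by case Pb: (P b); rewrite // (P_uniq _ _ Pb Pa) eqxx in neq_ba.
by rewrite big1 // => a _; case Pa: (P a) => //; case: noP; exists a.
Qed.

Section OneTrack.
Variables (nn R L : nat) (G : nat -> nat).

(* The guard [0 < m] makes W(0) empty: [in_window nn 0] holds at residue 0. *)
Definition hit m x :=
  (0 < m) && [exists a : 'I_R, in_window nn m (x + \sum_(c < a) G c + (L - 1))].

Lemma hit_mono m m' x : m <= m' -> hit m x -> hit m' x.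
Proof.
move=> le_mm' /andP [m_gt0 /existsP [a Ha]]; apply/andP; split; first exact: leq_trans le_mm'.
by apply/existsP; exists a; apply: in_window_mono Ha.
Qed.

Hypotheses (G_ge : forall c, c < R -> 2 * L <= G c) (G_sum : \sum_(c < R) G c = nn).

Lemma sum_gaps_ge a b : a < b <= R -> 2 * L <= \sum_(a <= c < b) G c.
Proof.
case/andP=> lt_ab le_bR; have /G_ge := leq_trans lt_ab le_bR.
by rewrite big_ltn //; lia.
Qed.

Lemma sum_gaps_cat a b : a <= b -> \sum_(c < b) G c = \sum_(c < a) G c + \sum_(a <= c < b) G c.
Proof. by move=> le_ab; rewrite -!(big_mkord xpredT) (@big_cat_nat _ _ _ a 0 b _ _ (leq0n a) le_ab). Qed.

Lemma gaps_total_ge : 2 * R * L <= nn.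
Proof.
have : \sum_(c < R) (2 * L) <= nn by rewrite -G_sum leq_sum // => c _; exact: G_ge.
by rewrite sum_nat_const card_ord; lia.
Qed.

(* Run ends a < b are at least 2L apart on the cycle in both directions, so the arcs
   of length 2m <= 2L around them are disjoint. *)
Lemma in_window_run_ltn m x a b : 0 < m <= L -> a < b -> b < R ->
  in_window nn m (x + \sum_(c < a) G c + (L - 1)) ->
  ~~ in_window nn m (x + \sum_(c < b) G c + (L - 1)).
Proof.
case/andP=> m_gt0 le_mL lt_ab lt_bR.
have := sum_gaps_cat (ltnW lt_bR); rewrite G_sum (sum_gaps_cat (ltnW lt_ab)).
set P := \sum_(c < a) G c; set D := \sum_(a <= c < b) G c; set Q := \sum_(b <= c < R) _.
have ge_D : 2 * L <= D by apply: sum_gaps_ge; lia.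
have ge_Q : 2 * L <= Q by apply: sum_gaps_ge; lia.
move=> total; rewrite !in_windowE; try lia.
have -> : x + (P + D) + (L - 1) + (m - 1) = x + P + (L - 1) + (m - 1) + D by lia.
rewrite -[(_ + D) %% nn]modnDml; set u := _ %% nn.
have lt_un : u < nn by rewrite ltn_pmod; lia.
by clearbody u => lt_u; rewrite modn_small; lia.
Qed.

Lemma in_window_run_uniq m x (a b : 'I_R) : 0 < m <= L ->
  in_window nn m (x + \sum_(c < a) G c + (L - 1)) ->
  in_window nn m (x + \sum_(c < b) G c + (L - 1)) -> a = b.
Proof.
move=> m_range in_a in_b; case: (ltngtP a b) => [lt_ab | lt_ba | /val_inj //].
  by have := in_window_run_ltn m_range lt_ab (ltn_ord b) in_a; rewrite in_b.
by have := in_window_run_ltn m_range lt_ba (ltn_ord a) in_b; rewrite in_a.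
Qed.

Lemma sum_hit m : m <= L -> \sum_(x < nn) hit m x = 2 * R * m.
Proof.
move=> le_mL; have [->|m_gt0] := posnP m; first by rewrite muln0 big1.
transitivity (\sum_(x < nn) \sum_(a < R) in_window nn m (x + \sum_(c < a) G c + (L - 1))).
  apply: eq_bigr => x _; rewrite /hit m_gt0 exists_sum_uniq // => a b.
  by apply: in_window_run_uniq; rewrite m_gt0.
rewrite exchange_big (eq_bigr (fun=> m + m)) => [|a _].
  by rewrite sum_nat_const card_ord; lia.
have le_2m : m + m <= nn by have := gaps_total_ge; have := ltn_ord a; nia.
under eq_bigr => x _ do rewrite in_windowE // -!addnA.
have [k nnE] : exists k, nn = k.+1 by exists nn.-1; lia.
by rewrite nnE (sum_ord_shift _ (fun y => y < m + m)) sum_ord_ltn // -nnE.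
Qed.

End OneTrack.

Section Tracks.
Variables (n l r : nat -> nat) (g : nat -> nat -> nat).

Local Notation tuples d := {dffun forall i : 'I_d, 'I_(n i)}.

Lemma card_tuples d : #|tuples d| = \prod_(i < d) n i.
Proof.
rewrite card_dep_ffun foldrE big_map big_enum /=.
by apply: eq_bigr => i _; rewrite card_ord.
Qed.

Definition init d (p : tuples d.+1) : tuples d :=
  finfun (fun j : 'I_d => p (widen_ord (leqnSn d) j) : 'I_(n j)).

Lemma sum_tuplesS d (F : tuples d -> 'I_(n d) -> nat) :
  \sum_(p : tuples d.+1) F (init p) (p ord_max) = \sum_(q : tuples d) \sum_(x < n d) F q x.
Proof.
pose split_last (p : tuples d.+1) := (init p, p ord_max).
have split_inj : injective split_last.
  move=> p1 p2 [/ffunP eq_init eq_last]; apply/ffunP => i.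
  have [lt_id | ] := ltnP i d; last first.
    move=> le_di; have -> // : i = ord_max by apply/val_inj => /=; have := ltn_ord i; lia.
  have -> : i = widen_ord (leqnSn d) (Ordinal lt_id) by apply/val_inj.
  by have := eq_init (Ordinal lt_id); rewrite !ffunE.
have split_bij : bijective split_last.
  by apply: (inj_card_bij split_inj); rewrite card_prod !card_tuples card_ord big_ord_recr.
by rewrite pair_big (reindex split_last (onW_bij _ split_bij)).
Qed.

(* A tuple read as a function on all of nat, so that (in)validity can be compared
   between the first d and the first d+1 tracks. *)
Definition pos d (p : tuples d) (k : nat) : nat :=
  if insub k is Some i then nat_of_ord (p i) else 0.

Lemma posE d (p : tuples d) (i : 'I_d) : pos p i = p i.
Proof. by rewrite /pos valK. Qed.

Lemma pos_init d (p : tuples d.+1) k : k < d -> pos (init p) k = pos p k.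
Proof.
move=> lt_kd; have -> : k = Ordinal lt_kd by [].
by rewrite posE ffunE; exact: esym (posE p (widen_ord (leqnSn d) (Ordinal lt_kd))).
Qed.

Lemma pos_last d (p : tuples d.+1) : pos p d = p ord_max.
Proof. exact: (posE p ord_max). Qed.

Definition hits k m x := hit (n k) (r k) (l k) (g k) m x.

Lemma hits_mono k m m' x : m <= m' -> hits k m x -> hits k m' x.
Proof. exact: hit_mono. Qed.

Definition valid_on d (v : nat -> nat) :=
  [forall i : 'I_d, forall j : 'I_d, (i < j) ==> ~~ (hits i (l j) (v i) && hits j (l j) (v j))].

Definition avoids d m (v : nat -> nat) := [forall k : 'I_d, ~~ hits k m (v k)].

Lemma valid_onP d v :
  reflect (forall i j, i < j < d -> ~~ (hits i (l j) (v i) && hits j (l j) (v j))) (valid_on d v).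
Proof.
apply: (iffP forallP) => [valid_v i j /andP [lt_ij lt_jd] | valid_v i].
  by have /forallP/(_ (Ordinal lt_jd))/implyP := valid_v (Ordinal (ltn_trans lt_ij lt_jd)); apply.
by apply/forallP => j; apply/implyP => lt_ij; apply: valid_v; rewrite lt_ij /=.
Qed.

Lemma avoidsP d m v : reflect (forall k, k < d -> ~~ hits k m (v k)) (avoids d m v).
Proof. by apply: (iffP forallP) => [avoid_v k lt_kd | avoid_v k]; [exact: (avoid_v (Ordinal lt_kd)) | exact: avoid_v]. Qed.

Lemma eq_valid_on d v w : (forall k, k < d -> v k = w k) -> valid_on d v = valid_on d w.
Proof.
move=> eq_vw; apply/valid_onP/valid_onP => valid_ i j /[dup] lt_ijd /andP [lt_ij lt_jd];
  have lt_id := ltn_trans lt_ij lt_jd.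
  by rewrite -!eq_vw //; exact: valid_.
by rewrite !eq_vw //; exact: valid_.
Qed.

Lemma eq_avoids d m v w : (forall k, k < d -> v k = w k) -> avoids d m v = avoids d m w.
Proof.
by move=> eq_vw; apply/avoidsP/avoidsP => avoid_ k lt_kd; [rewrite -eq_vw | rewrite eq_vw]; auto.
Qed.

Lemma valid_onS d v :
  valid_on d.+1 v = valid_on d v && (hits d (l d) (v d) ==> avoids d (l d) v).
Proof.
apply/valid_onP/andP => [valid_v | [/valid_onP valid_v /implyP avoid_v] i j].
  split; first by apply/valid_onP => i j /andP [lt_ij lt_jd]; apply: valid_v; rewrite lt_ij ltnW.
  apply/implyP => hit_d; apply/avoidsP => k lt_kd.
  by move: (valid_v k d); rewrite lt_kd ltnSn hit_d => /(_ isT); rewrite andbT.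
case/andP=> lt_ij; rewrite ltnS leq_eqVlt => /orP [/eqP eq_jd | lt_jd]; last by apply: valid_v; rewrite lt_ij.
subst j.
by apply/negP => /andP [hit_i /avoid_v /avoidsP/(_ i lt_ij)]; rewrite hit_i.
Qed.

Lemma avoidsS d m v : avoids d.+1 m v = avoids d m v && ~~ hits d m (v d).
Proof.
apply/avoidsP/andP => [avoid_v | [/avoidsP avoid_v hit_d] k].
  by split; [apply/avoidsP => k lt_kd; apply: avoid_v; rewrite ltnW | apply: avoid_v].
by rewrite ltnS leq_eqVlt => /orP [/eqP-> // | /avoid_v].
Qed.

Lemma avoids_mono d m m' v : m <= m' -> avoids d m' v -> avoids d m v.
Proof.
move=> le_mm' /avoidsP avoid_v; apply/avoidsP => k /avoid_v; apply: contra.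
exact: hits_mono.
Qed.

Lemma valid_avoidsS d m v : m <= l d ->
  valid_on d.+1 v && avoids d.+1 m v =
  if hits d m (v d) then false
  else if hits d (l d) (v d) then valid_on d v && avoids d (l d) v
  else valid_on d v && avoids d m v.
Proof.
move=> le_ml; rewrite valid_onS avoidsS.
have [_ | _] /= := boolP (hits d m (v d)); first by rewrite !andbF.
have [_ | _] /= := boolP (hits d (l d) (v d)); last by rewrite !andbT.
case: (boolP (avoids d (l d) v)) => [avoid_l | _]; last by rewrite andbF.
by rewrite (avoids_mono le_ml avoid_l) !andbT.
Qed.

Definition count_avoid d m := \sum_(q : tuples d) (valid_on d (pos q) && avoids d m (pos q)).

Lemma count_avoidS d m : m <= l d ->
  (forall c, c < r d -> 2 * l d <= g d c) -> \sum_(c < r d) g d c = n d ->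
  count_avoid d.+1 m =
    count_avoid d m * (n d - 2 * r d * l d) + count_avoid d (l d) * (2 * r d * l d - 2 * r d * m).
Proof.
move=> le_ml g_ge g_sum.
pose F (q : tuples d) (x : 'I_(n d)) : bool :=
  if hits d m x then false
  else if hits d (l d) x then valid_on d (pos q) && avoids d (l d) (pos q)
  else valid_on d (pos q) && avoids d m (pos q).
transitivity (\sum_(x < n d) \sum_(q : tuples d) F q x).
  rewrite exchange_big -sum_tuplesS; apply: eq_bigr => p _.
  rewrite valid_avoidsS // pos_last /F (eq_valid_on (pos_init p)).
  by rewrite (eq_avoids m (pos_init p)) (eq_avoids (l d) (pos_init p)).
rewrite (eq_bigr (fun x : 'I_(n d) => ~~ hits d (l d) x * count_avoid d m
                          + (hits d (l d) x && ~~ hits d m x) * count_avoid d (l d))) => [|x _].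
  rewrite big_split /= -!big_distrl /=.
  have sum_l : \sum_(x < n d) hits d (l d) x = 2 * r d * l d := sum_hit g_ge g_sum (leqnn _).
  have sum_m : \sum_(x < n d) hits d m x = 2 * r d * m := sum_hit g_ge g_sum le_ml.
  have sum_not_l : \sum_(x < n d) ~~ hits d (l d) x + \sum_(x < n d) hits d (l d) x = n d.
    rewrite -big_split /= (eq_bigr (fun=> 1)) => [|x _]; last by case: hits.
    by rewrite sum_nat_const card_ord muln1.
  have sum_l_not_m : \sum_(x < n d) (hits d (l d) x && ~~ hits d m x)
                     + \sum_(x < n d) hits d m x = \sum_(x < n d) hits d (l d) x.
    rewrite -big_split; apply: eq_bigr => x _.
    by have [/(hits_mono le_ml)-> | _] := boolP (hits d m x); rewrite /= ?andbT ?addn0.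
  rewrite (mulnC (count_avoid d m)) (mulnC (count_avoid d (l d))); congr (_ * _ + _ * _).
    by rewrite -sum_l -[X in _ = X - _]sum_not_l addnK.
  by rewrite -sum_l -sum_m -sum_l_not_m addnK.
rewrite /F; have [hit_m | _] := boolP (hits d m x).
  by rewrite (hits_mono le_ml hit_m) big1.
by case: (hits d (l d) x); rewrite /= ?mul0n ?mul1n ?addn0.
Qed.

Lemma count_valid_avoid0 d : (forall j, j < d -> 0 < l j) -> count_valid d n l r g = count_avoid d 0.
Proof.
move=> l_gt0; rewrite /count_valid /count_avoid -sum1_card big_mkcond /=.
apply: eq_bigr => p _; rewrite inE.
suff -> : valid l r g p = valid_on d (pos p) && avoids d 0 (pos p) by case: (_ && _).
have -> : avoids d 0 (pos p) by apply/avoidsP.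
rewrite andbT; apply: eq_forallb => i; apply: eq_forallb => j.
by rewrite /hits /hit !posE !l_gt0.
Qed.

End Tracks.

Local Open Scope ring_scope.

Section AvoidRec.
Variables (R : comNzRingType) (l r : nat -> nat).

Fixpoint avoid_rec (nR : nat -> R) d m : R :=
  if d is d'.+1 then
    avoid_rec nR d' m * (nR d' - (2 * r d' * l d')%:R)
    + avoid_rec nR d' (l d') * ((2 * r d' * l d')%:R - (2 * r d' * m)%:R)
  else 1.

Lemma eq_avoid_rec (nR nR' : nat -> R) d m :
  (forall k, (k < d)%N -> nR k = nR' k) -> avoid_rec nR d m = avoid_rec nR' d m.
Proof.
elim: d m => [//|d IH] m eq_n /=.
by rewrite eq_n // !IH // => k lt_kd; apply: eq_n; apply: ltnW.
Qed.

Variable nR : nat -> R.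
Local Notation A := (avoid_rec nR).
Local Notation factor k := (nR k - (2 * r k * l k)%:R).

Lemma avoid_rec0_sub d m :
  A d 0 - A d m = (2 * m)%:R * \sum_(i < d) ((r i)%:R * A i (l i) * \prod_(i.+1 <= k < d) factor k).
Proof.
elim: d m => [|d IH] m; first by rewrite big_ord0 /= subrr mulr0.
rewrite big_ord_recr /= big_geq // mulr1.
rewrite (eq_bigr (fun i : 'I_d => (r i)%:R * A i (l i) * \prod_(i.+1 <= k < d) factor k * factor d));
  last by move=> i _; rewrite big_nat_recr /= ?mulrA.
rewrite -big_distrl /=; move: (IH m); set S := \sum_(i < d) _ => IHm.
have -> : A d 0 = A d m + (2 * m)%:R * S by rewrite -IHm; ring.
by rewrite !natrM; ring.
Qed.

Lemma avoid_rec0E d : A d 0 =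
  \prod_(k < d) nR k
  - 4 * \sum_(i < d) \sum_(j < d | (i < j)%N)
      ((r i * r j * l j ^ 2)%:R * A i (l i) * \prod_(i.+1 <= k < j) factor k * \prod_(j.+1 <= k < d) nR k).
Proof.
elim: d => [|d IH]; first by rewrite /= !big_ord0 mulr0 subr0.
pose T i j := (r i * r j * l j ^ 2)%:R * A i (l i) * \prod_(i.+1 <= k < j) factor k.
rewrite big_ord_recr /=.
rewrite (eq_bigr (fun i : 'I_d.+1 => \sum_(j < d.+1)
    if (i < j)%N then T i j * \prod_(j.+1 <= k < d.+1) nR k else 0)); last by move=> i _; rewrite big_mkcond.
rewrite big_ord_recr /= [X in _ - 4 * (_ + X)]big1 ?addr0; last first.
  by move=> j _; rewrite ltnNge leq_ord.
rewrite [X in _ - 4 * X](eq_bigr (fun i : 'I_d =>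
    (\sum_(j < d | (i < j)%N) T i j * \prod_(j.+1 <= k < d) nR k) * nR d
    + (r d * l d ^ 2)%:R * ((r i)%:R * A i (l i) * \prod_(i.+1 <= k < d) factor k))); last first.
  move=> i _; rewrite big_ord_recr /= ltn_ord big_geq // mulr1.
  rewrite [in RHS]big_mkcond [in RHS]big_distrl /=; congr (_ + _).
    apply: eq_bigr => j _; case: ifP => _; last by rewrite mul0r.
    by rewrite big_nat_recr /= ?mulrA.
  by rewrite /T !natrM; ring.
rewrite big_split /= -big_distrl -big_distrr /=.
move: (avoid_rec0_sub d (l d)); set S := \sum_(i < d) _ => A0_sub.
move: IH; set U := \sum_(i < d) _ => IH.
have -> : A d (l d) = A d 0 - (2 * l d)%:R * S by rewrite -A0_sub; ring.
by rewrite IH !natrM ?natrX; ring.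
Qed.

End AvoidRec.

Lemma rmorph_avoid_rec (R S : comNzRingType) (f : {rmorphism R -> S}) l r (nR : nat -> R) d m :
  f (avoid_rec l r nR d m) = avoid_rec l r (fun k => f (nR k)) d m.
Proof.
elim: d m => [|d IH] m /=; first by rewrite rmorph1.
by rewrite rmorphD !(rmorphM f) !rmorphB !rmorph_nat !IH.
Qed.

Lemma horner_avoid_rec (R : comNzRingType) l r (nP : nat -> {poly R}) d m x :
  (avoid_rec l r nP d m).[x] = avoid_rec l r (fun k => (nP k).[x]) d m.
Proof. by rewrite -horner_evalE rmorph_avoid_rec. Qed.

Lemma avoid_rec_red (R : comNzRingType) (n l r : nat -> nat) i d m : (d <= i)%N ->
  (forall k, (k < i)%N -> (l i <= l k)%N /\ (2 * r k * l k <= n k)%N) ->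
  avoid_rec (red_l l i) r (fun k => (red_n n l r i k)%:R : R) d m
  = avoid_rec l r (fun k => (n k)%:R) d (m + l i).
Proof.
elim: d m => [//|d IH] m le_di params /=.
have [le_l le_n] := params d le_di.
rewrite !IH ?(ltnW le_di) // /red_l subnK //.
have le_n' : (2 * r d * l i <= n d)%N by apply: leq_trans le_n; rewrite leq_mul2l le_l orbT.
rewrite /red_n natrB // mulnBr natrB; last by rewrite leq_mul2l le_l orbT.
by rewrite !natrM natrD; ring.
Qed.

Lemma avoid_rec_monic (R : comNzRingType) l r (c : nat -> R) d m :
  avoid_rec l r (fun k => 'X - (c k)%:P) d m \is monic
  /\ size (avoid_rec l r (fun k => 'X - (c k)%:P) d m) = d.+1.
Proof.
elim: d m => [|d IH] m /=; first by rewrite monic1 size_poly1.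
have [monA sizeA] := IH m; have [_ sizeC] := IH (l d).
set A := avoid_rec _ _ _ d m; set C := avoid_rec _ _ _ d (l d); set K := (2 * r d * l d)%N.
have -> : 'X - (c d)%:P - K%:R = 'X - (c d + K%:R)%:P by rewrite polyCD polyC_natr opprD addrA.
have sizeAX : size (A * ('X - (c d + K%:R)%:P)) = d.+2.
  by rewrite size_monicM ?monicXsubC ?size_XsubC ?sizeA ?polyXsubC_eq0 ?addn2.
have sizeC' : (size (C * (K%:R - (2 * r d * m)%:R))%R < d.+2)%N.
  rewrite -!polyC_natr -polyCB; apply: leq_ltn_trans (size_polyMleq _ _) _.
  by rewrite sizeC size_polyC; case: (_ != 0); rewrite /= ?addn1 ?addn0.
split; last by rewrite size_polyDl ?sizeAX.
by rewrite monicE lead_coefDl ?sizeAX // -monicE monicMr ?monicXsubC.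
Qed.

Lemma count_avoidE (R : comNzRingType) d n l r g m : gaps_ok d n l r g ->
  (forall k j, (k <= j)%N -> (j < d)%N -> (l j <= l k)%N) -> (forall k, (k < d)%N -> (m <= l k)%N) ->
  (count_avoid n l r g d m)%:R = avoid_rec l r (fun k => (n k)%:R : R) d m.
Proof.
elim: d m => [|d IH] m gaps l_mono le_m.
  rewrite /count_avoid (eq_bigr (fun=> 1%N)) => [|q _].
    by rewrite sum_nat_const card_tuples big_ord0.
  suff [-> ->] : valid_on n l r g 0 (pos q) /\ avoids n l r g 0 m (pos q) by [].
  by split; apply/forallP => -[].
have [g_ge g_sum] := gaps d (ltnSn d).
have gaps' : gaps_ok d n l r g by move=> k lt_kd; apply: gaps; apply: ltnW.
have l_mono' k j : (k <= j)%N -> (j < d)%N -> (l j <= l k)%N.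
  by move=> le_kj lt_jd; apply: l_mono le_kj (ltnW lt_jd).
have le_m' k : (k < d)%N -> (m <= l k)%N by move=> lt_kd; apply: le_m; apply: ltnW.
have le_ld k : (k < d)%N -> (l d <= l k)%N by move=> lt_kd; apply: l_mono (ltnW lt_kd) (ltnSn d).
have le_m_ld : (2 * r d * m <= 2 * r d * l d)%N by rewrite leq_mul2l le_m ?orbT.
rewrite count_avoidS ?le_m // natrD !natrM !natrB ?(gaps_total_ge g_ge g_sum) //.
by rewrite (IH m) ?(IH (l d)).
Qed.

Lemma params_ok_ltn d n l r : params_ok d n l r ->
  forall k j, (k < j)%N -> (j < d)%N -> (l j < l k)%N.
Proof.
case=> l_ltn _ k; elim=> [//|j IH] lt_kj lt_jd.
have [lt_kj' | le_jk] := ltnP k j; last by rewrite (_ : k = j); [exact: l_ltn | lia].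
exact: ltn_trans (l_ltn j lt_jd) (IH lt_kj' (ltnW lt_jd)).
Qed.

Lemma count_validE (R : comNzRingType) d n l r g : params_ok d n l r -> gaps_ok d n l r g ->
  (count_valid d n l r g)%:R = avoid_rec l r (fun k => (n k)%:R : R) d 0.
Proof.
move=> params gaps; have lt_l := params_ok_ltn params; have [_ params_d] := params.
rewrite count_valid_avoid0 => [|j /params_d []//]; apply: count_avoidE => // k j.
by rewrite leq_eqVlt => /orP [/eqP-> // | lt_kj] lt_jd; exact/ltnW/lt_l.
Qed.

Lemma params_ok_red d n l r i : params_ok d n l r -> (i < d)%N ->
  params_ok i (red_n n l r i) (red_l l i) r.
Proof.
move=> params lt_id; have lt_l := params_ok_ltn params; have [_ params_d] := params.
split=> k lt_ki; rewrite /red_l /red_n.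
  by have := lt_l k.+1 i lt_ki lt_id; have := lt_l k k.+1 (ltnSn k) (ltn_trans lt_ki lt_id); lia.
have [_ r_gt0 le_n] := params_d k (ltn_trans lt_ki lt_id).
have := lt_l k i lt_ki lt_id; split; rewrite // ?mulnBr; lia.
Qed.

Lemma count_valid_red (R : comNzRingType) d n l r h i : params_ok d n l r -> (i < d)%N ->
  gaps_ok i (red_n n l r i) (red_l l i) r h ->
  (count_valid i (red_n n l r i) (red_l l i) r h)%:R = avoid_rec l r (fun k => (n k)%:R : R) i (l i).
Proof.
move=> params lt_id gaps; rewrite (count_validE _ (params_ok_red params lt_id) gaps).
rewrite avoid_rec_red // => k lt_ki.
have [_ _ le_n] := params.2 k (ltn_trans lt_ki lt_id).
by split=> //; exact/ltnW/(params_ok_ltn params).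
Qed.

Lemma count_valid_rec d n l r g (h : nat -> nat -> nat -> nat) :
  params_ok d n l r -> gaps_ok d n l r g ->
  (forall i, (i < d)%N -> gaps_ok i (red_n n l r i) (red_l l i) r (h i)) ->
  (count_valid d n l r g)%:Z =
    \prod_(k < d) (n k)%:Z
    - 4 * \sum_(i < d) \sum_(j < d | (i < j)%N)
        ((r i * r j * l j ^ 2)%:Z
         * (count_valid i (red_n n l r i) (red_l l i) r (h i))%:Z
         * \prod_(i.+1 <= k < j) ((n k)%:Z - (2 * r k * l k)%:Z)
         * \prod_(j.+1 <= k < d) (n k)%:Z).
Proof.
move=> params gaps gaps_red; rewrite -natz (count_validE _ params gaps) avoid_rec0E.
congr (_ - 4 * _); first by apply: eq_bigr => k _; rewrite natz.
apply: eq_bigr => i _; apply: eq_bigr => j _.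
rewrite -(count_valid_red _ params (ltn_ord i) (gaps_red i (ltn_ord i))) !natz.
by congr (_ * _ * _); apply: eq_bigr => k _; rewrite !natz.
Qed.

Lemma count_valid_poly d (l r : nat -> nat) :
  exists p : {poly int},
     p \is monic /\ size p = d.+1 /\ (d = 1%N -> p = 'X - (l 0%N)%:Z%:P) /\
     forall (m : int) (nv : nat -> nat) (g : nat -> nat -> nat),
       (forall i, (i < d)%N ->
          (nv i)%:Z = m - (l i)%:Z - 2 * \sum_(j < d | j != i :> nat) (r j * minn (l i) (l j))%:Z) ->
       params_ok d nv l r -> gaps_ok d nv l r g ->
       (count_valid d nv l r g)%:Z = p.[m].
Proof.
pose c k : int := (l k)%:Z + 2 * \sum_(j < d | j != k :> nat) (r j * minn (l k) (l j))%:Z.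
exists (avoid_rec l r (fun k => 'X - (c k)%:P) d 0).
have [monic_p size_p] := avoid_rec_monic l r c d 0.
do 2![split=> //]; split=> [d1 | m nv g nvE params gaps].
  subst d; rewrite /= !mul1r muln0 subr0 subrK /c big1 ?mulr0 ?addr0 // => j.
  by rewrite (ord1 j).
rewrite -natz (count_validE _ params gaps) horner_avoid_rec; apply: eq_avoid_rec => k lt_kd.
by rewrite hornerXsubC natz nvE // /c opprD addrA.
Qed.

Theorem proposition5p5 (d : nat) (n l r : nat -> nat) :
  (1 <= d)%N -> params_ok d n l r ->
  (forall g g' : nat -> nat -> nat, gaps_ok d n l r g -> gaps_ok d n l r g' ->
     count_valid d n l r g = count_valid d n l r g') /\
  (forall (n0 l0 r0 : nat -> nat) (g0 : nat -> nat -> nat), count_valid 0 n0 l0 r0 g0 = 1%N) /\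
  (forall (n0 l0 r0 : nat -> nat) (g0 : nat -> nat -> nat),
     params_ok 1 n0 l0 r0 -> gaps_ok 1 n0 l0 r0 g0 -> count_valid 1 n0 l0 r0 g0 = n0 0%N) /\
  (forall (g : nat -> nat -> nat) (h : nat -> nat -> nat -> nat),
     gaps_ok d n l r g ->
     (forall i, (i < d)%N -> gaps_ok i (red_n n l r i) (red_l l i) r (h i)) ->
     (count_valid d n l r g)%:Z =
       \prod_(k < d) (n k)%:Z
       - 4 * \sum_(i < d) \sum_(j < d | (i < j)%N)
           ((r i * r j * l j ^ 2)%:Z
            * (count_valid i (red_n n l r i) (red_l l i) r (h i))%:Z
            * \prod_(i.+1 <= k < j) ((n k)%:Z - (2 * r k * l k)%:Z)
            * \prod_(j.+1 <= k < d) (n k)%:Z)) /\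
  (exists p : {poly int},
     p \is monic /\ size p = d.+1 /\ (d = 1%N -> p = 'X - (l 0%N)%:Z%:P) /\
     forall (m : int) (nv : nat -> nat) (g : nat -> nat -> nat),
       (forall i, (i < d)%N ->
          (nv i)%:Z = m - (l i)%:Z - 2 * \sum_(j < d | j != i :> nat) (r j * minn (l i) (l j))%:Z) ->
       params_ok d nv l r -> gaps_ok d nv l r g ->
       (count_valid d nv l r g)%:Z = p.[m]).
Proof.
move=> _ params; split; [|split; [|split; [|split]]].
- move=> g g' gaps gaps'; apply/eqP; rewrite -(eqr_nat int).
  by rewrite (count_validE _ params gaps) (count_validE _ params gaps').
- by move=> n0 l0 r0 g0; apply/eqP; rewrite -(eqr_nat int) count_validE.
- move=> n0 l0 r0 g0 params0 gaps0; apply/eqP; rewrite -(eqr_nat int) (count_validE _ params0 gaps0) /=.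
  by rewrite !mul1r muln0 subr0 subrK.
- by move=> g h gaps gaps_red; exact: count_valid_rec.
- exact: count_valid_poly.
Qed.
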